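(* Let $P=(V;\leq)$ be a poset and let $L=(V;\sqsubseteq)$ be a linear extension of $P$ such that whenever $x<y$ in $P$ there is $z\in V$ with $x\sqsubset z\sqsubset y$ and $z$ incomparable in $P$ to both $x$ and $y$. Then there is a poset $Q$ on the set $V\times\{0,1,2\}$ whose restriction to $V\times\{1\}$ is isomorphic to $P$ and whose restrictions to $V\times\{0\}$ and to $V\times\{2\}$ are isomorphic to $L$ (so $Q$ is a union of a copy of $P$ and two copies of $L$), such that $\bigcup AM_3(Q)=Q$ and $AM_3(Q)$ is isomorphic to $L$.
   Context: A linear extension of $P$ is a linear order on $V$ containing $\leq$. $AM_3(Q)$ is the set of three-element maximal antichains of $Q$, ordered by domination ($X\leq Y$ iff each $x\in X$ is below some $y\in Y$), and $\bigcup AM_3(Q)$ is the union of these antichains. *)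

From Stdlib Require Import Classical.

Set Implicit Arguments.

Definition is_poset (T : Type) (le : T -> T -> Prop) : Prop :=
  (forall x, le x x) /\
  (forall x y, le x y -> le y x -> x = y) /\
  (forall x y z, le x y -> le y z -> le x z).

Definition is_linear_order (T : Type) (le : T -> T -> Prop) : Prop :=
  is_poset le /\ (forall x y, le x y \/ le y x).

Definition linear_extension (T : Type) (le lin : T -> T -> Prop) : Prop :=
  is_linear_order lin /\ (forall x y, le x y -> lin x y).

Definition strict (T : Type) (le : T -> T -> Prop) (x y : T) : Prop :=
  le x y /\ x <> y.

Definition incomparable (T : Type) (le : T -> T -> Prop) (x y : T) : Prop :=
  ~ le x y /\ ~ le y x.

Definition order_iso (A B : Type) (leA : A -> A -> Prop) (leB : B -> B -> Prop)
    (f : A -> B) : Prop :=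
  (forall x y, f x = f y -> x = y) /\
  (forall b, exists a, f a = b) /\
  (forall x y, leA x y <-> leB (f x) (f y)).

Definition isomorphic (A B : Type) (leA : A -> A -> Prop) (leB : B -> B -> Prop) : Prop :=
  exists f : A -> B, order_iso leA leB f.

Inductive layer : Type := l0 | l1 | l2.

Definition restr (V : Type) (Q : V * layer -> V * layer -> Prop) (i : layer)
    (x y : V) : Prop := Q (x, i) (y, i).

Definition set_eq (W : Type) (X Y : W -> Prop) : Prop := forall w, X w <-> Y w.

Definition antichain (W : Type) (Q : W -> W -> Prop) (X : W -> Prop) : Prop :=
  forall x y, X x -> X y -> Q x y -> x = y.

Definition max_antichain (W : Type) (Q : W -> W -> Prop) (X : W -> Prop) : Prop :=
  antichain Q X /\
  forall Y : W -> Prop, antichain Q Y -> (forall w, X w -> Y w) -> set_eq X Y.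

Definition three_elem (W : Type) (X : W -> Prop) : Prop :=
  exists a b c, a <> b /\ a <> c /\ b <> c /\ set_eq X (fun w => w = a \/ w = b \/ w = c).

Definition AM3 (W : Type) (Q : W -> W -> Prop) (X : W -> Prop) : Prop :=
  three_elem X /\ max_antichain Q X.

Definition dominated (W : Type) (Q : W -> W -> Prop) (X Y : W -> Prop) : Prop :=
  forall x, X x -> exists y, Y y /\ Q x y.

(* AM_3(Q) (sets up to extensional equality, ordered by domination) is
   order-isomorphic to (V, lin), via g : V -> AM_3(Q). *)
Definition AM3_iso (V W : Type) (Q : W -> W -> Prop) (lin : V -> V -> Prop)
    (g : V -> (W -> Prop)) : Prop :=
  (forall v, AM3 Q (g v)) /\
  (forall X, AM3 Q X -> exists v, set_eq (g v) X) /\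
  (forall u v, set_eq (g u) (g v) -> u = v) /\
  (forall u v, lin u v <-> dominated Q (g u) (g v)).

From Stdlib Require Import Classical.

(* Q stacks a copy of L (layer 2) below P (layer 1) below another copy of L
   (layer 0): inside a layer Q is lin, le, lin, and (x,i) < (y,j) for i > j
   exactly when x is strictly below y in L.  Each fibre {(v,0),(v,1),(v,2)} is
   then a maximal antichain, and fibres are ordered by domination as their
   base points are in L.  Conversely, a three-element maximal antichain meets
   the chains V x {0} and V x {2}, since otherwise an L-extreme point of
   either layer could be added to it; so it is {(a,0),(c,1),(b,2)} with
   a <= c <= b in L.  If a < b, the hypothesis on L provides c' in [a,b]
   incomparable to c in P, and (c',1) would extend the antichain; hence
   a = c = b and the antichain is a fibre. *)

Lemma isomorphic_refl {A : Type} (R : A -> A -> Prop) : isomorphic R R.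
Proof.
  exists (fun x => x); split; [auto | split; [eauto | tauto]].
Qed.

Lemma antichain_comparable_eq {W : Type} {Q : W -> W -> Prop} {X : W -> Prop} {x y} :
  antichain Q X -> X x -> X y -> Q x y \/ Q y x -> x = y.
Proof.
  intros Xanti Xx Xy [xy | yx]; [| symmetry]; auto.
Qed.

Lemma max_antichain_mem {W : Type} {Q : W -> W -> Prop} {X : W -> Prop} {w} :
  max_antichain Q X ->
  (forall x, X x -> Q x w -> x = w) ->
  (forall x, X x -> Q w x -> w = x) ->
  X w.
Proof.
  intros [Xanti Xmax] below above.
  assert (Yanti : antichain Q (fun x => X x \/ x = w)).
  { intros x y [Xx | ->] [Xy | ->]; auto. }
  apply (Xmax _ Yanti (fun x Xx => or_introl Xx)); auto.
Qed.

Lemma three_elem_eq {W : Type} {X : W -> Prop} {p q r} :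
  three_elem X -> X p -> X q -> X r -> p <> q -> p <> r -> q <> r ->
  set_eq X (fun w => w = p \/ w = q \/ w = r).
Proof.
  intros (e1 & e2 & e3 & d12 & d13 & d23 & HX) Xp Xq Xr npq npr nqr w.
  split; [intro Xw | intros [-> | [-> | ->]]; assumption].
  apply HX in Xp, Xq, Xr, Xw.
  destruct Xp as [-> | [-> | ->]], Xq as [-> | [-> | ->]],
           Xr as [-> | [-> | ->]], Xw as [-> | [-> | ->]];
    intuition congruence.
Qed.

Section StackOrder.

Context {V : Type} {le lin : V -> V -> Prop}.
Hypothesis le_poset : is_poset le.
Hypothesis lin_ext : linear_extension le lin.

Let le_refl : forall x, le x x := proj1 le_poset.
Let le_antisym : forall x y, le x y -> le y x -> x = y := proj1 (proj2 le_poset).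
Let le_trans : forall x y z, le x y -> le y z -> le x z := proj2 (proj2 le_poset).
Let lin_refl : forall x, lin x x := proj1 (proj1 (proj1 lin_ext)).
Let lin_antisym : forall x y, lin x y -> lin y x -> x = y :=
  proj1 (proj2 (proj1 (proj1 lin_ext))).
Let lin_trans : forall x y z, lin x y -> lin y z -> lin x z :=
  proj2 (proj2 (proj1 (proj1 lin_ext))).
Let lin_total : forall x y, lin x y \/ lin y x := proj2 (proj1 lin_ext).
Let le_lin : forall x y, le x y -> lin x y := proj2 lin_ext.

Lemma strict_lin_asym x y : strict lin x y -> ~ lin y x.
Proof.
  intros [xy nxy] yx; auto.
Qed.

Lemma not_strict_lin x y : ~ strict lin x y -> lin y x.
Proof.
  intro nxy; destruct (lin_total y x) as [yx | xy]; [exact yx |].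
  destruct (classic (x = y)) as [-> | ne]; [apply lin_refl | contradiction (conj xy ne)].
Qed.

Lemma lin_strict_trans x y z : lin x y -> strict lin y z -> strict lin x z.
Proof.
  intros xy [yz nyz]; split; [eauto | intros ->; auto].
Qed.

Lemma strict_lin_trans x y z : strict lin x y -> lin y z -> strict lin x z.
Proof.
  intros [xy nxy] yz; split; [eauto | intros ->; auto].
Qed.

Lemma lin_lower_bound3 x y z : exists m, lin m x /\ lin m y /\ lin m z.
Proof.
  destruct (lin_total x y), (lin_total x z), (lin_total y z);
    solve [exists x; eauto | exists y; eauto | exists z; eauto].
Qed.

Lemma lin_upper_bound3 x y z : exists m, lin x m /\ lin y m /\ lin z m.
Proof.
  destruct (lin_total x y), (lin_total x z), (lin_total y z);
    solve [exists x; eauto | exists y; eauto | exists z; eauto].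
Qed.

Definition stack_order (p q : V * layer) : Prop :=
  match snd p, snd q with
  | l0, l0 | l2, l2 => lin (fst p) (fst q)
  | l1, l1 => le (fst p) (fst q)
  | l1, l0 | l2, l1 | l2, l0 => strict lin (fst p) (fst q)
  | _, _ => False
  end.

Definition fibre (v : V) (w : V * layer) : Prop :=
  w = (v, l0) \/ w = (v, l1) \/ w = (v, l2).

Lemma stack_order_poset : is_poset stack_order.
Proof.
  split; [| split].
  - intros [x []]; cbn; auto.
  - intros [x []] [y []]; cbn; intros xy yx;
      solve [contradiction | f_equal; auto].
  - intros [x []] [y []] [z []]; cbn; intros xy yz;
      solve [contradiction | eauto
            | apply (lin_strict_trans x y z); [eauto | exact yz]
            | apply (strict_lin_trans x y z); [exact xy | eauto]
            | exact (lin_strict_trans x y z (proj1 xy) yz)].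
Qed.

Lemma fibre_max_antichain v : max_antichain stack_order (fibre v).
Proof.
  split.
  - intros p q [-> | [-> | ->]] [-> | [-> | ->]]; cbn;
      solve [reflexivity | contradiction | intros [_ []]; reflexivity].
  - intros Y Yanti fibre_Y w; split; [apply fibre_Y | intro Yw].
    destruct (classic (fibre v w)) as [vw | nvw]; [exact vw | exfalso].
    assert (meets : exists u, fibre v u /\ (stack_order u w \/ stack_order w u)).
    { destruct w as [x i].
      assert (nxv : x <> v) by (intros ->; destruct i; apply nvw; cbv; auto).
      destruct i, (lin_total x v) as [xv | vx].
      - exists (v, l0); split; [left |]; auto.
      - exists (v, l0); split; [left |]; auto.
      - exists (v, l0); split; [left | right; split]; auto.
      - exists (v, l2); split; [right; right | left; split]; auto.
      - exists (v, l2); split; [right; right |]; auto.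
      - exists (v, l2); split; [right; right |]; auto. }
    destruct meets as (u & vu & comparable).
    apply nvw; rewrite <- (antichain_comparable_eq Yanti (fibre_Y u vu) Yw comparable).
    exact vu.
Qed.

Lemma fibre_AM3 v : AM3 stack_order (fibre v).
Proof.
  split; [| apply fibre_max_antichain].
  exists (v, l0), (v, l1), (v, l2); do 3 (split; [discriminate |]); intro w; apply iff_refl.
Qed.

Lemma fibre_dominated_iff u v :
  lin u v <-> dominated stack_order (fibre u) (fibre v).
Proof.
  split.
  - intros uv w [-> | [-> | ->]].
    + exists (v, l0); split; [left |]; cbn; auto.
    + destruct (classic (u = v)) as [-> | nuv].
      * exists (v, l1); split; [right; left |]; cbn; auto.
      * exists (v, l0); split; [left | split]; cbn; auto.
    + exists (v, l2); split; [right; right |]; cbn; auto.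
  - intro dom; destruct (dom (u, l0)) as (w & [-> | [-> | ->]] & uw);
      solve [left; reflexivity | exact uw | contradiction].
Qed.

Lemma fibre_inj u v : set_eq (fibre u) (fibre v) -> u = v.
Proof.
  intro E; destruct (proj1 (E (u, l0))) as [h | [h | h]]; [left | ..]; congruence.
Qed.

Lemma AM3_meets_layer0 {X} : AM3 stack_order X -> exists a, X (a, l0).
Proof.
  intros [(e1 & e2 & e3 & _ & _ & _ & HX) Xmax].
  apply NNPP; intro no0.
  destruct (lin_lower_bound3 (fst e1) (fst e2) (fst e3)) as (m & m1 & m2 & m3).
  assert (below : forall x i, X (x, i) -> lin m x).
  { intros x i Xx; destruct (proj1 (HX _) Xx) as [<- | [<- | <-]]; assumption. }
  apply no0; exists m; apply (max_antichain_mem Xmax);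
    intros [x []] Xx xm; exfalso; cbn in xm;
    solve [eauto | contradiction | eapply strict_lin_asym; eauto].
Qed.

Lemma AM3_meets_layer2 {X} : AM3 stack_order X -> exists b, X (b, l2).
Proof.
  intros [(e1 & e2 & e3 & _ & _ & _ & HX) Xmax].
  apply NNPP; intro no2.
  destruct (lin_upper_bound3 (fst e1) (fst e2) (fst e3)) as (m & m1 & m2 & m3).
  assert (above : forall x i, X (x, i) -> lin x m).
  { intros x i Xx; destruct (proj1 (HX _) Xx) as [<- | [<- | <-]]; assumption. }
  apply no2; exists m; apply (max_antichain_mem Xmax);
    intros [x []] Xx xm; exfalso; cbn in xm;
    solve [eauto | contradiction | eapply strict_lin_asym; eauto].
Qed.

Lemma AM3_meets_layer1 {X} : AM3 stack_order X -> exists c, X (c, l1).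
Proof.
  intro HAM.
  destruct (AM3_meets_layer0 HAM) as [a Xa], (AM3_meets_layer2 HAM) as [b Xb].
  destruct HAM as [(e1 & e2 & e3 & d12 & d13 & d23 & HX) [Xanti _]].
  apply NNPP; intro no1.
  assert (in_a_or_b : forall w, X w -> w = (a, l0) \/ w = (b, l2)).
  { intros [x []] Xx.
    - left; exact (antichain_comparable_eq Xanti Xx Xa (lin_total x a)).
    - exfalso; eauto.
    - right; exact (antichain_comparable_eq Xanti Xx Xb (lin_total x b)). }
  destruct (in_a_or_b e1), (in_a_or_b e2), (in_a_or_b e3); try congruence; apply HX; auto.
Qed.

Hypothesis separated : forall x y, strict le x y ->
  exists z, strict lin x z /\ strict lin z y /\
            incomparable le z x /\ incomparable le z y.

Lemma between_incomparable {a c b} :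
  lin a c -> lin c b -> a <> b -> exists c', lin a c' /\ lin c' b /\ incomparable le c' c.
Proof.
  intros ac cb nab.
  assert (endpoint : exists x, x <> c /\ lin a x /\ lin x b).
  { destruct (classic (c = a)) as [-> | nca].
    - exists b; split; [congruence | auto].
    - exists a; split; [congruence | eauto]. }
  destruct endpoint as (x & nxc & ax & xb).
  destruct (classic (le x c)) as [xc | nle_xc].
  { destruct (separated _ _ (conj xc nxc)) as (z & [xz _] & [zc _] & _ & inc).
    exists z; eauto. }
  destruct (classic (le c x)) as [cx | nle_cx].
  { destruct (separated _ _ (conj cx (not_eq_sym nxc))) as (z & [cz _] & [zx _] & inc & _).
    exists z; eauto. }
  exists x; repeat split; auto.
Qed.

Lemma AM3_is_fibre X : AM3 stack_order X -> exists v, set_eq (fibre v) X.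
Proof.
  intro HAM.
  destruct (AM3_meets_layer0 HAM) as [a Xa], (AM3_meets_layer1 HAM) as [c Xc],
           (AM3_meets_layer2 HAM) as [b Xb].
  destruct HAM as [X3 Xmax]; pose proof (proj1 Xmax) as Xanti.
  assert (HX := three_elem_eq X3 Xa Xc Xb
                  ltac:(discriminate) ltac:(discriminate) ltac:(discriminate)).
  assert (ac : lin a c) by (apply not_strict_lin; intro ca; discriminate (Xanti _ _ Xc Xa ca)).
  assert (cb : lin c b) by (apply not_strict_lin; intro bc; discriminate (Xanti _ _ Xb Xc bc)).
  assert (ab : a = b).
  { apply NNPP; intro nab.
    destruct (between_incomparable ac cb nab) as (c' & ac' & c'b & nc'c & ncc').
    assert (Xc' : X (c', l1)).
    { apply (max_antichain_mem Xmax); intros w Xw wc'; exfalso;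
        apply HX in Xw; destruct Xw as [-> | [-> | ->]]; cbn in wc';
        solve [contradiction | eapply strict_lin_asym; eauto]. }
    apply HX in Xc'; destruct Xc' as [E | [E | E]]; try discriminate.
    injection E as ->; auto. }
  subst b; assert (c = a) by auto; subst c.
  exists a; intro w; exact (iff_sym (HX w)).
Qed.

End StackOrder.

Arguments stack_order {V} le lin.

Theorem lemma6p6 (V : Type) (le lin : V -> V -> Prop) :
  is_poset le ->
  linear_extension le lin ->
  (forall x y, strict le x y ->
     exists z, strict lin x z /\ strict lin z y /\
               incomparable le z x /\ incomparable le z y) ->
  exists Q : V * layer -> V * layer -> Prop,
    is_poset Q /\
    isomorphic (restr Q l1) le /\
    isomorphic (restr Q l0) lin /\
    isomorphic (restr Q l2) lin /\
    (forall w : V * layer, exists X, AM3 Q X /\ X w) /\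
    (exists g : V -> (V * layer -> Prop), AM3_iso Q lin g).
Proof.
  intros le_poset lin_ext separated.
  exists (stack_order le lin).
  split; [exact (stack_order_poset le_poset lin_ext) |].
  split; [exact (isomorphic_refl le) |].
  split; [exact (isomorphic_refl lin) |].
  split; [exact (isomorphic_refl lin) |].
  split.
  - intros [v i]; exists (fibre v); split; [exact (fibre_AM3 lin_ext v) |].
    destruct i; cbv; auto.
  - exists (fibre (V := V)); split; [| split; [| split]].
    + exact (fibre_AM3 lin_ext).
    + exact (AM3_is_fibre le_poset lin_ext separated).
    + exact fibre_inj.
    + exact (fibre_dominated_iff le_poset).
Qed.
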